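(* There is a finitary argumentation framework $\mathcal{F}$ with $\mathit{tfstg2}(\mathcal{F})=\emptyset$, i.e., with no $\mathit{tfstg2}$ extension.
   Context: An argumentation framework (AF) is a pair $\mathcal{F}=(A_{\mathcal{F}},R_{\mathcal{F}})$ with $R_{\mathcal{F}}\subseteq A_{\mathcal{F}}\times A_{\mathcal{F}}$; write $a\rightarrow b$ for $(a,b)\in R_{\mathcal{F}}$. $\mathcal{F}$ is finitary if every argument is attacked by only finitely many arguments. For $S\subseteq A_{\mathcal{F}}$, $\mathcal{F}|_S=(A_{\mathcal{F}}\cap S,R_{\mathcal{F}}\cap(S\times S))$; $S$ is conflict-free if no $a,b\in S$ have $a\rightarrow b$; $S^\oplus=S\cup\{x:\exists y\in S,\ y\rightarrow x\}$; a stage extension is a conflict-free $S$ such that no conflict-free $T$ has $S^\oplus\subsetneq T^\oplus$. $\mathrm{SCC}(a)$ is the set of $b$ with directed attack paths (possibly of length 0) from $a$ to $b$ and from $b$ to $a$. For $X,S\subseteq A_{\mathcal{F}}$, $D_S(X)=\{b\in X:\exists a\in S\setminus X,\ a\rightarrow b\}$. For $S\subseteq A_{\mathcal{F}}$, $a\in A_{\mathcal{F}}$ and ordinals $\alpha$: $C^0_S(a)=\mathrm{SCC}(a)$; $C^{\alpha+1}_S(a)$ = the strongly connected component of $a$ in $\mathcal{F}|_{C^\alpha_S(a)\setminus D_S(C^\alpha_S(a))}$ (empty if $a$ is not in that set); for limit $\lambda$, $C^\lambda_S(a)$ = the strongly connected component of $a$ in $\mathcal{F}|_{\bigcap_{\alpha<\lambda}C^\alpha_S(a)}$.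 $\alpha_S(a)$ is the least $\alpha$ with $a\notin C^\alpha_S(a)$ or $C^{\alpha+1}_S(a)=C^\alpha_S(a)$. $S\in\mathit{tfstg2}(\mathcal{F})$ iff $S$ is conflict-free and for each $a\in A_{\mathcal{F}}$, either $a\notin C^{\alpha_S(a)}_S(a)$ or $S\cap C^{\alpha_S(a)}_S(a)$ is a stage extension of $\mathcal{F}|_{C^{\alpha_S(a)}_S(a)}$. *)

(* Argumentation frameworks over an ambient carrier type U:
   an AF is a pair (A, R) with A : U -> Prop the set of arguments and
   R : U -> U -> Prop the attack relation, R included in A x A. *)
From Stdlib Require Import List Relations.

Section AF.
Variable U : Type.

Definition subset (X Y : U -> Prop) : Prop := forall x, X x -> Y x.
Definition set_eq (X Y : U -> Prop) : Prop := forall x, X x <-> Y x.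
Definition strict_subset (X Y : U -> Prop) : Prop :=
  subset X Y /\ ~ subset Y X.

Definition is_AF (A : U -> Prop) (R : U -> U -> Prop) : Prop :=
  forall a b, R a b -> A a /\ A b.

Definition finitary (A : U -> Prop) (R : U -> U -> Prop) : Prop :=
  forall b, A b -> exists l : list U, forall a, R a b -> In a l.

Definition restrA (A S : U -> Prop) : U -> Prop := fun x => A x /\ S x.
Definition restrR (R : U -> U -> Prop) (S : U -> Prop) : U -> U -> Prop :=
  fun x y => R x y /\ S x /\ S y.

Definition conflict_free (R : U -> U -> Prop) (S : U -> Prop) : Prop :=
  forall a b, S a -> S b -> ~ R a b.

Definition plus (R : U -> U -> Prop) (S : U -> Prop) : U -> Prop :=
  fun x => S x \/ exists y, S y /\ R y x.

Definition stage_ext (A : U -> Prop) (R : U -> U -> Prop) (S : U -> Prop) : Prop :=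
  subset S A /\ conflict_free R S /\
  ~ (exists T, subset T A /\ conflict_free R T /\
               strict_subset (plus R S) (plus R T)).

Definition SCC (A : U -> Prop) (R : U -> U -> Prop) (a : U) : U -> Prop :=
  fun b => A a /\ A b /\ clos_refl_trans U R a b /\ clos_refl_trans U R b a.

Definition Dset (R : U -> U -> Prop) (S X : U -> Prop) : U -> Prop :=
  fun b => X b /\ exists a, S a /\ ~ X a /\ R a b.

Definition Cstep (A : U -> Prop) (R : U -> U -> Prop) (S : U -> Prop) (a : U)
  (X : U -> Prop) : U -> Prop :=
  let Y := fun x => X x /\ ~ Dset R S X x in
  SCC (restrA A Y) (restrR R Y) a.

(* The sets C^alpha_S(a), alpha an ordinal, as an inductive family:
   C^0, successors, and limit stages (SCC of a in F restricted to the
   intersection of a nonempty family of earlier stages). *)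
Inductive Cstage (A : U -> Prop) (R : U -> U -> Prop) (S : U -> Prop) (a : U)
  : (U -> Prop) -> Prop :=
| Cstage0 : Cstage A R S a (SCC A R a)
| CstageS : forall X, Cstage A R S a X -> Cstage A R S a (Cstep A R S a X)
| CstageL : forall K : (U -> Prop) -> Prop,
    (exists X, K X) ->
    (forall X, K X -> Cstage A R S a X) ->
    let I := fun x => forall X, K X -> X x in
    Cstage A R S a (SCC (restrA A I) (restrR R I) a).

Definition Cstop (A : U -> Prop) (R : U -> U -> Prop) (S : U -> Prop) (a : U)
  (X : U -> Prop) : Prop :=
  ~ X a \/ set_eq (Cstep A R S a X) X.

(* X = C^{alpha_S(a)}_S(a): the first stage (the stages decrease) satisfying
   the stopping condition; no strictly larger (= earlier) stage satisfies it. *)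
Definition Cfinal (A : U -> Prop) (R : U -> U -> Prop) (S : U -> Prop) (a : U)
  (X : U -> Prop) : Prop :=
  Cstage A R S a X /\ Cstop A R S a X /\
  forall Y, Cstage A R S a Y -> strict_subset X Y -> ~ Cstop A R S a Y.

Definition tfstg2 (A : U -> Prop) (R : U -> U -> Prop) (S : U -> Prop) : Prop :=
  subset S A /\ conflict_free R S /\
  forall a, A a -> forall X, Cfinal A R S a X ->
    ~ X a \/ stage_ext (restrA A X) (restrR R X) (fun x => S x /\ X x).

End AF.

Arguments subset {U}. Arguments set_eq {U}. Arguments strict_subset {U}.
Arguments is_AF {U}. Arguments finitary {U}. Arguments restrA {U}.
Arguments restrR {U}. Arguments conflict_free {U}. Arguments plus {U}.
Arguments stage_ext {U}. Arguments SCC {U}. Arguments Dset {U}.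
Arguments Cstep {U}. Arguments Cstage {U}. Arguments Cstop {U}.
Arguments Cfinal {U}. Arguments tfstg2 {U}.

From Stdlib Require Import List Relations RelationClasses Morphisms Classical PeanoNat Lia Wf_nat.
Import ListNotations.

(* For each i the arguments Yn i, Tn i, Gn i k, Hn i k form a strongly connected
   gadget: Yn i attacks every Gn i k, the chain Gn i (S k) -> Hn i k -> Gn i k leads
   down to Gn i 0, which attacks Yn i and the self-attacker Tn i.  Moreover Yn j
   attacks Nn j, and Nn j attacks Gn i k whenever j = i + k + 1; each argument has
   finitely many attackers.  Let E be a tfstg2 extension.
   - If E contains no Nn j with j > i, gadget i is never reduced, so E must be a stage
     extension on it.  The Gn i k together attack the whole gadget, while Yn i in E
     leaves Tn i unattacked.  Hence Yn i in E forces some Yn j, j > i, out of E.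
   - If Yn j is not in E, then Nn j is (it is a singleton component without attacker
     in E).  If j is the least such index above i, Nn j cuts gadget i at Gn i (j-i-1),
     and the successive reductions then remove Gn i k from the top down, forcing every
     Hn i k below the cut into E, until only Yn i is left: so Yn i is in E.
   Thus some Yn k lies outside E, then all Yn j with j > k lie in E, and the first
   point at k + 1 gives a contradiction. *)

#[export] Instance set_eq_Equivalence {U : Type} : Equivalence (@set_eq U).
Proof.
  split.
  - intros X x; reflexivity.
  - intros X Y H x; symmetry; apply H.
  - intros X Y Z H1 H2 x; etransitivity; [apply H1 | apply H2].
Qed.

Definition single {U : Type} (a : U) : U -> Prop := fun x => x = a.

Definition strongly_connected {U : Type} (R : U -> U -> Prop) (X : U -> Prop) : Prop :=
  forall b c, X b -> X c -> clos_refl_trans U (restrR R X) b c.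

Lemma bounded_nat_max (P : nat -> Prop) n :
  (exists l, P l) -> (forall l, P l -> l <= n) ->
  exists l, P l /\ forall l', P l' -> l' <= l.
Proof.
  intros [l0 Pl0] Hbound.
  destruct (dec_inh_nat_subset_has_unique_least_element (fun d => P (n - d)))
    as [d [[Pd Hleast] _]].
  - intros d; apply classic.
  - exists (n - l0); replace (n - (n - l0)) with l0 by (specialize (Hbound l0 Pl0); lia).
    exact Pl0.
  - exists (n - d); split; [exact Pd|].
    intros l Pl; specialize (Hbound l Pl).
    assert (d <= n - l) by (apply Hleast; replace (n - (n - l)) with l by lia; exact Pl).
    lia.
Qed.

Section Stages.
Context {U : Type} {A : U -> Prop} {R : U -> U -> Prop}.

Lemma rt_incl (R1 R2 : relation U) :
  inclusion U R1 R2 -> inclusion U (clos_refl_trans U R1) (clos_refl_trans U R2).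
Proof.
  intros H x y Hxy; induction Hxy.
  - apply rt_step; auto.
  - apply rt_refl.
  - eapply rt_trans; eauto.
Qed.

Lemma rt_restrR_incl (X Y : U -> Prop) : subset X Y ->
  inclusion U (clos_refl_trans U (restrR R X)) (clos_refl_trans U (restrR R Y)).
Proof. intros H; apply rt_incl; intros x y (Rxy & Xx & Xy); repeat split; auto. Qed.

Lemma rt_no_pred (Rel : relation U) x a :
  (forall y, ~ Rel y a) -> clos_refl_trans U Rel x a -> x = a.
Proof.
  intros H Hxa; apply clos_rt_rtn1 in Hxa; destruct Hxa as [|y z Ryz]; auto.
  exfalso; eapply H; eauto.
Qed.

Lemma rt_pred_closed (Rel : relation U) (B : U -> Prop) x a :
  (forall u v, Rel u v -> B v -> B u) -> B a -> clos_refl_trans U Rel x a -> B x.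
Proof.
  intros H Ba; apply clos_refl_trans_ind_right; eauto.
Qed.

Lemma SCC_restr_set_eq X Y a : set_eq X Y ->
  set_eq (SCC (restrA A X) (restrR R X) a) (SCC (restrA A Y) (restrR R Y) a).
Proof.
  intros H b; unfold SCC, restrA.
  assert (subset X Y) by (intros x; apply H).
  assert (subset Y X) by (intros x; apply H).
  split; intros (Aa & Ab & Hab & Hba); repeat split; try tauto; try (apply H; tauto);
    eapply rt_restrR_incl; eauto.
Qed.

Lemma Dset_set_eq E X Y : set_eq X Y -> set_eq (Dset R E X) (Dset R E Y).
Proof.
  intros H b; unfold Dset.
  split; intros [Xb [c (Ec & Xc & Rcb)]]; (split; [apply H; exact Xb|]);
    exists c; rewrite (H c) in *; auto.
Qed.

Lemma Cstep_set_eq E a X Y : set_eq X Y ->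
  set_eq (Cstep A R E a X) (Cstep A R E a Y).
Proof.
  intros H; apply SCC_restr_set_eq; intros x.
  pose proof (Dset_set_eq E X Y H x); specialize (H x); tauto.
Qed.

#[export] Instance Cstep_proper E a : Proper (set_eq ==> set_eq) (Cstep A R E a).
Proof. intros X Y; apply Cstep_set_eq. Qed.

Lemma Cstep_sub E a X : subset (Cstep A R E a X) X.
Proof. intros b; unfold Cstep, SCC, restrA; tauto. Qed.

Lemma SCC_restr_strongly_connected X a : subset X A -> strongly_connected R X -> X a ->
  set_eq (SCC (restrA A X) (restrR R X) a) X.
Proof.
  intros XA Hsc Xa b; unfold SCC, restrA; split; [tauto|].
  intros Xb; repeat split; auto.
Qed.

Lemma Cstep_eq E a X X' :
  subset X' A -> strongly_connected R X' -> X' a ->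
  subset X' (fun x => X x /\ ~ Dset R E X x) -> subset (Cstep A R E a X) X' ->
  set_eq (Cstep A R E a X) X'.
Proof.
  intros X'A Hsc X'a HX' HC b; split; [apply HC|].
  intros X'b; unfold Cstep, SCC, restrA.
  repeat split; auto; try apply HX'; auto; eapply rt_restrR_incl; eauto.
Qed.

Lemma single_strongly_connected a : strongly_connected R (single a).
Proof. intros b c -> ->; apply rt_refl. Qed.

Lemma Cstep_single E a : A a -> (forall c, R c a -> c <> a -> ~ E c) ->
  set_eq (Cstep A R E a (single a)) (single a).
Proof.
  intros Aa H; apply Cstep_eq.
  - intros x ->; exact Aa.
  - apply single_strongly_connected.
  - reflexivity.
  - intros b ->; split; [reflexivity|].
    intros [_ [c (Ec & Hc & Rca)]]; exact (H c Rca Hc Ec).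
  - apply Cstep_sub.
Qed.

Fixpoint Citer E a (n : nat) : U -> Prop :=
  match n with 0 => SCC A R a | S n => Cstep A R E a (Citer E a n) end.

Lemma Cstage_Citer E a n : Cstage A R E a (Citer E a n).
Proof. induction n; constructor; auto. Qed.

Section Chain.
Variables (E : U -> Prop) (a : U) (X : nat -> U -> Prop) (n : nat).
Hypothesis chain0 : set_eq (X 0) (SCC A R a).
Hypothesis chainS : forall l, l < n -> set_eq (Cstep A R E a (X l)) (X (S l)).
Hypothesis chain_stop : set_eq (Cstep A R E a (X n)) (X n).
Hypothesis chain_strict : forall l, l < n -> ~ set_eq (X (S l)) (X l).
Hypothesis chain_SCC : forall l, l <= n -> set_eq (SCC (restrA A (X l)) (restrR R (X l)) a) (X l).
Hypothesis chain_end : X n a.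

Lemma Citer_chain l : l <= n -> set_eq (Citer E a l) (X l).
Proof.
  induction l as [|l IH]; intros Hl; simpl.
  - symmetry; exact chain0.
  - rewrite <- chainS by lia; apply Cstep_set_eq, IH; lia.
Qed.

Lemma chain_antitone l l' : l <= l' -> l' <= n -> subset (X l') (X l).
Proof.
  induction 1 as [|l' Hll' IH]; intros Hl'; [intros x; auto|].
  intros x Xx; apply IH; [lia|].
  apply (Cstep_sub E a); apply (chainS l'); [lia | exact Xx].
Qed.

Lemma Cstage_chain Y : Cstage A R E a Y -> exists l, l <= n /\ set_eq Y (X l).
Proof.
  induction 1 as [|Y _ [l [Hl HY]]|K [Z0 KZ0] _ IH I].
  - exists 0; split; [lia | symmetry; exact chain0].
  - destruct (Nat.eq_dec l n) as [->|Hne].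
    + exists n; split; auto; rewrite <- chain_stop; apply Cstep_set_eq, HY.
    + exists (S l); split; [lia|]; rewrite <- chainS by lia; apply Cstep_set_eq, HY.
  - (* The intersection of the family is its member of largest index. *)
    set (P := fun l => l <= n /\ exists Z, K Z /\ set_eq Z (X l)).
    destruct (bounded_nat_max P n) as [ls [[Hls [Zs [KZs HZs]]] Hmax]].
    { destruct (IH Z0 KZ0) as [l [Hl HZl]]; exists l; split; eauto. }
    { intros l [Hl _]; exact Hl. }
    exists ls; split; [exact Hls|].
    rewrite <- (chain_SCC ls Hls); apply SCC_restr_set_eq; intros x; split.
    + intros Ix; apply HZs, Ix, KZs.
    + intros Xx Z KZ; destruct (IH Z KZ) as [l [Hl HZl]].
      apply HZl, (chain_antitone l ls); auto.
      apply Hmax; split; eauto.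
Qed.

Lemma Cfinal_chain : exists Xf, Cfinal A R E a Xf /\ set_eq Xf (X n).
Proof.
  exists (Citer E a n); split; [|apply Citer_chain; lia].
  split; [apply Cstage_Citer|split].
  - right; rewrite (Citer_chain n) by lia; rewrite chain_stop; reflexivity.
  - intros Y HY [Hsub Hnsub] Hstop.
    destruct (Cstage_chain Y HY) as [l [Hl HYl]].
    destruct (Nat.eq_dec l n) as [->|Hne].
    + apply Hnsub; intros x Yx; apply (Citer_chain n); auto; apply HYl, Yx.
    + destruct Hstop as [Ya | Hfix].
      * apply Ya, HYl, (chain_antitone l n); auto; lia.
      * apply (chain_strict l); [lia|].
        rewrite <- chainS, <- HYl by lia; exact Hfix.
Qed.

End Chain.

Lemma tfstg2_final_single E a X : tfstg2 A R E -> A a -> ~ R a a ->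
  Cfinal A R E a X -> set_eq X (single a) -> E a.
Proof.
  intros (_ & _ & Htf) Aa Raa Hfin HX.
  destruct (Htf a Aa X Hfin) as [Xa | (_ & _ & Hmax)]; [exfalso; apply Xa, HX; reflexivity|].
  apply NNPP; intros Ea; apply Hmax; exists (single a); split; [|split].
  - intros x ->; split; [exact Aa | apply HX; reflexivity].
  - intros x y -> -> [Raa' _]; exact (Raa Raa').
  - split.
    + intros x [[Ex Xx] | [y [[Ey Xy] _]]]; exfalso; apply Ea.
      * apply HX in Xx; rewrite <- Xx; exact Ex.
      * apply HX in Xy; rewrite <- Xy; exact Ey.
    + intros Hsub; destruct (Hsub a (or_introl eq_refl)) as [[Ea' _] | [y [[Ey Xy] _]]];
        apply Ea; [exact Ea'|]; apply HX in Xy; rewrite <- Xy; exact Ey.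
Qed.

Lemma tfstg2_mem_of_chain E a (X : nat -> U -> Prop) n :
  tfstg2 A R E -> A a -> ~ R a a -> (forall c, R c a -> ~ E c) ->
  set_eq (X 0) (SCC A R a) ->
  (forall l, l < n -> set_eq (Cstep A R E a (X l)) (X (S l))) ->
  (forall l, l < n -> ~ set_eq (X (S l)) (X l)) ->
  (forall l, l < n -> set_eq (SCC (restrA A (X l)) (restrR R (X l)) a) (X l)) ->
  set_eq (X n) (single a) ->
  E a.
Proof.
  intros Htf Aa Raa Hatt H0 HS Hstrict HSCC Hn.
  destruct (Cfinal_chain E a X n) as [Xf [Hfin HXf]]; auto.
  - rewrite Hn; apply Cstep_single; auto.
  - intros l Hl; destruct (Nat.eq_dec l n) as [->|Hne]; [|apply HSCC; lia].
    etransitivity; [apply (SCC_restr_set_eq _ _ a Hn)|]; rewrite Hn.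
    apply SCC_restr_strongly_connected;
      [intros x ->; exact Aa | apply single_strongly_connected | reflexivity].
  - apply Hn; reflexivity.
  - eapply tfstg2_final_single; eauto; rewrite HXf; exact Hn.
Qed.

End Stages.

Inductive node : Type :=
| Yn (i : nat) | Tn (i : nat) | Gn (i k : nat) | Hn (i k : nat) | Nn (j : nat).

Definition attacks (x y : node) : Prop :=
  match x, y with
  | Yn i, Gn i' _ => i' = i
  | Yn i, Nn j => j = i
  | Tn i, Tn i' => i' = i
  | Tn i, Gn i' k => i' = i /\ k = 0
  | Gn i k, Hn i' k' => i' = i /\ S k' = k
  | Gn i k, Yn i' => i' = i /\ k = 0
  | Gn i k, Tn i' => i' = i /\ k = 0
  | Hn i k, Gn i' k' => i' = i /\ k' = k
  | Nn j, Gn i k => j = S (i + k)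
  | _, _ => False
  end.

Definition nodes : node -> Prop := fun _ => True.

Lemma attacks_finitary : finitary nodes attacks.
Proof.
  intros b _; destruct b as [i|i|i k|i k|j];
    [ exists [Gn i 0] | exists [Gn i 0; Tn i]
    | exists [Yn i; Hn i k; Tn i; Nn (S (i + k))] | exists [Gn i (S k)] | exists [Yn j] ];
    intros [] Ra; simpl in Ra; try contradiction; decompose [and] Ra; subst; simpl; auto 6.
Qed.

Definition level (x : node) : nat :=
  match x with Yn i | Tn i | Gn i _ | Hn i _ => 2 * i + 1 | Nn j => 2 * j end.

Lemma rt_attacks_level x y : clos_refl_trans node attacks x y -> level y <= level x.
Proof.
  induction 1 as [x y Rxy| |]; [|lia|lia].
  destruct x, y; simpl in *; intuition; subst; lia.
Qed.

Definition below (k : nat) (o : option nat) : Prop :=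
  match o with None => True | Some r => k < r end.

(* [comp i None] is gadget i; [comp i (Some r)] is the part of it that still reaches
   Yn i once Gn i r is removed. *)
Definition comp (i : nat) (o : option nat) (x : node) : Prop :=
  match x with
  | Yn i' => i' = i
  | Tn i' => i' = i /\ below 0 o
  | Gn i' k => i' = i /\ below k o
  | Hn i' k => i' = i /\ below (S k) o
  | Nn _ => False
  end.

Lemma below_S k o : below (S k) o -> below k o.
Proof. destruct o; simpl; lia. Qed.

Ltac comp_edge := apply rt_step; repeat split; simpl; auto using below_S.

Lemma Gn_rt_Yn i o k : below k o ->
  clos_refl_trans node (restrR attacks (comp i o)) (Gn i k) (Yn i).
Proof.
  induction k as [|k IH]; intros Hk; [comp_edge|].
  apply rt_trans with (Hn i k); [comp_edge|].
  apply rt_trans with (Gn i k); [comp_edge | auto using below_S].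
Qed.

Lemma comp_rt_Yn i o b : comp i o b ->
  clos_refl_trans node (restrR attacks (comp i o)) (Yn i) b /\
  clos_refl_trans node (restrR attacks (comp i o)) b (Yn i).
Proof.
  destruct b as [i'|i'|i' k|i' k|j]; simpl; intros Hb; try contradiction.
  - subst i'; split; apply rt_refl.
  - destruct Hb as [-> Hb]; split; apply rt_trans with (Gn i 0); comp_edge.
  - destruct Hb as [-> Hb]; split; [comp_edge | apply Gn_rt_Yn; auto].
  - destruct Hb as [-> Hb]; split; [apply rt_trans with (Gn i (S k)); comp_edge|].
    apply rt_trans with (Gn i k); [comp_edge | apply Gn_rt_Yn; auto using below_S].
Qed.

Lemma comp_strongly_connected i o : strongly_connected attacks (comp i o).
Proof.
  intros b c Hb Hc.
  apply rt_trans with (Yn i); [apply comp_rt_Yn, Hb | apply comp_rt_Yn, Hc].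
Qed.

Lemma comp_self_SCC i o a : comp i o a ->
  set_eq (SCC (restrA nodes (comp i o)) (restrR attacks (comp i o)) a) (comp i o).
Proof.
  intros Ha; apply SCC_restr_strongly_connected; auto using comp_strongly_connected.
  intros x _; exact I.
Qed.

Lemma SCC_comp i a : comp i None a -> set_eq (SCC nodes attacks a) (comp i None).
Proof.
  intros Ha b; split.
  - intros (_ & _ & Hab & Hba).
    apply rt_attacks_level in Hab; apply rt_attacks_level in Hba.
    destruct a, b; simpl in *; intuition; subst; lia.
  - intros Hb.
    assert (Hlift : inclusion node (clos_refl_trans node (restrR attacks (comp i None)))
                      (clos_refl_trans node attacks))
      by (apply rt_incl; intros x y [Rxy _]; exact Rxy).
    repeat split; apply Hlift, comp_strongly_connected; auto.
Qed.

Lemma SCC_Nn j : set_eq (SCC nodes attacks (Nn j)) (single (Nn j)).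
Proof.
  intros b; split.
  - intros (_ & _ & Hab & Hba).
    apply rt_attacks_level in Hab; apply rt_attacks_level in Hba.
    destruct b; simpl in *; try lia; unfold single; f_equal; lia.
  - intros ->; repeat split; apply rt_refl.
Qed.

Lemma comp_Some0 i : set_eq (comp i (Some 0)) (single (Yn i)).
Proof.
  intros []; unfold single; simpl; split; intros H; try lia; try discriminate;
    try (destruct H; lia); subst; auto; congruence.
Qed.

Lemma comp_step E i o r a :
  below r o -> Dset attacks E (comp i o) (Gn i r) ->
  (forall k, k < r -> ~ E (Nn (S (i + k)))) -> comp i (Some r) a ->
  set_eq (Cstep nodes attacks E a (comp i o)) (comp i (Some r)).
Proof.
  intros Hr Dr Hlow Ha; apply Cstep_eq; auto using comp_strongly_connected.
  - intros x _; exact I.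
  - intros b Hb; split.
    + destruct b, o; simpl in *; intuition lia.
    + intros [_ [c (Ec & Oc & Rcb)]].
      destruct c, b, o; simpl in *; intuition; subst; try lia; eapply Hlow; eauto.
  - intros b (_ & [_ [Ob nDb]] & Hab & Hba).
    set (Y := fun x => comp i o x /\ x <> Gn i r).
    assert (HY : subset (fun x => comp i o x /\ ~ Dset attacks E (comp i o) x) Y)
      by (intros x [Ox nDx]; split; [exact Ox | intros ->; exact (nDx Dr)]).
    apply (rt_restrR_incl _ _ HY) in Hab; apply (rt_restrR_incl _ _ HY) in Hba.
    (* [B] is closed under predecessors once Gn i r is gone, and its extra element
       Hn i (r - 1) then has no predecessor at all, so it is not reachable from a. *)
    set (B := fun x => comp i (Some r) x \/ exists k, r = S k /\ x = Hn i k).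
    assert (HB : B b).
    { apply (rt_pred_closed (restrR attacks Y) B b a); [|left; exact Ha|exact Hba].
      intros u v (Ruv & [Ou Nu] & _) [Bv | [k [-> ->]]]; unfold B.
      - destruct u, v; simpl in *; intuition; subst; try (left; repeat split; lia).
        all: try (destruct r; [congruence | left; repeat split; lia]).
        destruct (Nat.eq_dec (S k) r) as [<-|Hne]; [right; eauto|].
        left; split; auto; lia.
      - destruct u; simpl in Ruv; intuition; subst; congruence. }
    destruct HB as [Hb | [k [-> ->]]]; [exact Hb|].
    apply rt_no_pred in Hab; [subst a; simpl in Ha; lia|].
    intros y (Ry & [_ Ny] & _); destruct y; simpl in Ry; intuition; subst; congruence.
Qed.

Lemma Cstep_comp_Hn E i o r : below (S r) o -> Dset attacks E (comp i o) (Gn i (S r)) ->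
  set_eq (Cstep nodes attacks E (Hn i r) (comp i o)) (single (Hn i r)).
Proof.
  intros Hr Dr; apply Cstep_eq; auto using single_strongly_connected; try reflexivity.
  - intros x _; exact I.
  - intros b ->; split; [simpl; auto|].
    intros [_ [c (_ & Oc & Rcb)]]; destruct c; simpl in Rcb; try contradiction.
    destruct Rcb as [-> <-]; apply Oc; simpl; auto.
  - intros b (_ & _ & _ & Hba); apply rt_no_pred in Hba; [exact Hba|].
    intros y (Ry & [_ nDy] & _); destruct y; simpl in Ry; try contradiction.
    destruct Ry as [-> <-]; exact (nDy Dr).
Qed.

Section Cascade.
Variables (E : node -> Prop) (i m : nat).
Hypothesis E_tfstg2 : tfstg2 nodes attacks E.
Hypothesis E_Nn_cut : E (Nn (S (i + m))).
Hypothesis E_Nn_below : forall k, k < m -> ~ E (Nn (S (i + k))).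

(* [trunc l] is the l-th reduction of gadget i: Nn (S (i + m)) first cuts it at Gn i m,
   then Hn i (m - l) cuts it at Gn i (m - l). *)
Definition bound (l : nat) : option nat :=
  match l with 0 => None | S l => Some (m - l) end.

Definition trunc (l : nat) : node -> Prop := comp i (bound l).

Lemma Dset_trunc l : l <= m -> (0 < l -> E (Hn i (m - l))) ->
  Dset attacks E (trunc l) (Gn i (m - l)).
Proof.
  intros Hl HE; destruct l as [|l]; simpl.
  - split; [simpl; auto|]; exists (Nn (S (i + m))); simpl; repeat split; auto; lia.
  - split; [simpl; split; auto; lia|].
    exists (Hn i (m - S l)); simpl; repeat split; auto with arith; lia.
Qed.

Lemma trunc_step l a : l <= m -> (0 < l -> E (Hn i (m - l))) -> trunc (S l) a ->
  set_eq (Cstep nodes attacks E a (trunc l)) (trunc (S l)).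
Proof.
  intros Hl HE Ha; apply comp_step; [| apply Dset_trunc; auto | | exact Ha].
  - destruct l; simpl; lia.
  - intros k Hk; apply E_Nn_below; lia.
Qed.

Lemma trunc_step_Hn l : l < m -> (0 < l -> E (Hn i (m - l))) ->
  set_eq (Cstep nodes attacks E (Hn i (m - S l)) (trunc l)) (single (Hn i (m - S l))).
Proof.
  intros Hl HE; apply Cstep_comp_Hn.
  - destruct l; simpl; lia.
  - replace (S (m - S l)) with (m - l) by lia; apply Dset_trunc; auto; lia.
Qed.

Lemma trunc_strict l : l <= m -> ~ set_eq (trunc (S l)) (trunc l).
Proof.
  intros Hl Heq.
  assert (Hin : trunc l (Gn i (m - l))) by (destruct l; simpl; split; auto; lia).
  apply Heq in Hin; simpl in Hin; lia.
Qed.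

Lemma Gn_not_mem r : r <= m -> (r < m -> E (Hn i r)) -> ~ E (Gn i r).
Proof.
  intros Hr HE HG; destruct E_tfstg2 as (_ & Hcf & _).
  destruct (Nat.eq_dec r m) as [->|Hne].
  - apply (Hcf _ _ E_Nn_cut HG); simpl; lia.
  - apply (Hcf _ _ (HE ltac:(lia)) HG); simpl; auto.
Qed.

Lemma Yn_mem : (forall r, r < m -> E (Hn i r)) -> E (Yn i).
Proof.
  intros HE; apply (tfstg2_mem_of_chain E (Yn i) trunc (S m) E_tfstg2).
  - exact I.
  - intros [].
  - intros c Rc; destruct c; simpl in Rc; try contradiction.
    destruct Rc as [<- ->]; apply Gn_not_mem; auto; lia.
  - symmetry; apply SCC_comp; simpl; auto.
  - intros l Hl; apply trunc_step; [lia | intros; apply HE; lia | simpl; auto].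
  - intros l Hl; apply trunc_strict; lia.
  - intros l Hl; apply comp_self_SCC; destruct l; simpl; auto.
  - unfold trunc, bound; rewrite Nat.sub_diag; apply comp_Some0.
Qed.

Lemma Hn_mem r : r < m -> (forall r', r < r' < m -> E (Hn i r')) -> E (Hn i r).
Proof.
  intros Hr HE.
  set (X := fun l => if Nat.eqb l (m - r) then single (Hn i r) else trunc l).
  assert (HX : forall l, l < m - r -> X l = trunc l).
  { intros l Hl; unfold X; destruct (Nat.eqb_spec l (m - r)); [lia | reflexivity]. }
  assert (HXin : forall l, l < m - r -> trunc l (Hn i r)).
  { intros l Hl; destruct l; simpl; split; auto; lia. }
  apply (tfstg2_mem_of_chain E (Hn i r) X (m - r) E_tfstg2).
  - exact I.
  - intros [].
  - intros c Rc; destruct c; simpl in Rc; try contradiction.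
    destruct Rc as [<- <-]; apply Gn_not_mem; [lia | intros; apply HE; lia].
  - rewrite HX by lia; symmetry; apply SCC_comp; simpl; auto.
  - intros l Hl; rewrite (HX l Hl); unfold X.
    destruct (Nat.eqb_spec (S l) (m - r)) as [Hend|Hmid].
    + replace r with (m - S l) at 1 2 by lia.
      apply trunc_step_Hn; [lia | intros; apply HE; lia].
    + apply trunc_step; [lia | intros; apply HE; lia | apply HXin; lia].
  - intros l Hl Heq; rewrite (HX l Hl) in Heq; unfold X in Heq.
    destruct (Nat.eqb_spec (S l) (m - r)).
    + assert (Hy : trunc l (Yn i)) by (destruct l; simpl; auto).
      apply Heq in Hy; discriminate Hy.
    + exact (trunc_strict l ltac:(lia) Heq).
  - intros l Hl; rewrite HX by lia; apply comp_self_SCC, HXin, Hl.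
  - unfold X; rewrite Nat.eqb_refl; reflexivity.
Qed.

Lemma Hn_all r : r < m -> E (Hn i r).
Proof.
  remember (m - r) as d eqn:Hd; revert r Hd.
  induction d as [d IH] using lt_wf_ind; intros r Hd Hr.
  apply Hn_mem; [exact Hr|]; intros r' Hr'; apply (IH (m - r')); lia.
Qed.

Lemma Yn_mem_of_cut : E (Yn i).
Proof. apply Yn_mem, Hn_all. Qed.

End Cascade.

Lemma comp_not_stage_ext E i X : conflict_free attacks E -> E (Yn i) ->
  set_eq X (comp i None) ->
  ~ stage_ext (restrA nodes X) (restrR attacks X) (fun x => E x /\ X x).
Proof.
  intros Hcf EY HX (_ & _ & Hmax); apply Hmax.
  set (T := fun x => exists k, x = Gn i k).
  assert (HT : subset X (plus (restrR attacks X) T)).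
  { intros x Xx; pose proof (proj1 (HX x) Xx) as Ox.
    assert (XG : forall k, X (Gn i k)) by (intros k; apply HX; simpl; auto).
    destruct x as [i'|i'|i' k|i' k|j]; simpl in Ox; try contradiction.
    - subst i'; right; exists (Gn i 0); split; [eexists; reflexivity | repeat split; auto].
    - destruct Ox as [-> _]; right; exists (Gn i 0).
      split; [eexists; reflexivity | repeat split; auto].
    - destruct Ox as [-> _]; left; exists k; reflexivity.
    - destruct Ox as [-> _]; right; exists (Gn i (S k)).
      split; [eexists; reflexivity | repeat split; auto]. }
  exists T; split; [|split].
  - intros x [k ->]; split; [exact I | apply HX; simpl; auto].
  - intros x y [k ->] [k' ->] [[] _].
  - split.
    + intros x [[_ Xx] | [y [[_ Xy] (_ & _ & Xx)]]]; apply HT, Xx.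
    + intros Hsub.
      assert (XT : X (Tn i)) by (apply HX; simpl; auto).
      destruct (Hsub (Tn i) (HT _ XT)) as [[ET _] | [y [[Ey _] [Ry _]]]].
      * exact (Hcf _ _ ET ET eq_refl).
      * destruct y; simpl in Ry; try contradiction; destruct Ry; subst.
        -- exact (Hcf _ _ Ey Ey eq_refl).
        -- exact (Hcf _ _ Ey EY (conj eq_refl eq_refl)).
Qed.

Lemma Cfinal_Yn_gadget E i : (forall k, ~ E (Nn (S (i + k)))) ->
  exists X, Cfinal nodes attacks E (Yn i) X /\ set_eq X (comp i None).
Proof.
  intros HN; apply (Cfinal_chain E (Yn i) (fun _ => comp i None) 0).
  - symmetry; apply SCC_comp; simpl; auto.
  - lia.
  - apply Cstep_eq; auto using comp_strongly_connected, Cstep_sub.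
    + intros x _; exact I.
    + simpl; auto.
    + intros b Ob; split; [exact Ob|].
      intros [_ [c (Ec & Oc & Rcb)]].
      destruct c, b; simpl in *; intuition; subst; solve [eapply HN; eauto | firstorder].
  - lia.
  - intros l _; apply comp_self_SCC; simpl; auto.
  - simpl; auto.
Qed.

Section NoExtension.
Variable E : node -> Prop.
Hypothesis E_tfstg2 : tfstg2 nodes attacks E.

Lemma Nn_mem j : ~ E (Yn j) -> E (Nn j).
Proof.
  intros HY; apply (tfstg2_mem_of_chain E (Nn j) (fun _ => single (Nn j)) 0 E_tfstg2).
  - exact I.
  - intros [].
  - intros c Rc; destruct c; simpl in Rc; try contradiction; subst; exact HY.
  - symmetry; apply SCC_Nn.
  - lia.
  - lia.
  - lia.
  - reflexivity.
Qed.

Lemma exists_Yn_not_mem_above i : E (Yn i) -> exists j, i < j /\ ~ E (Yn j).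
Proof.
  intros EY; apply NNPP; intros Hnone.
  destruct E_tfstg2 as (_ & Hcf & Hfinal).
  assert (HN : forall k, ~ E (Nn (S (i + k)))).
  { intros k EN; apply Hnone; exists (S (i + k)); split; [lia|].
    intros EY'; exact (Hcf _ _ EY' EN eq_refl). }
  destruct (Cfinal_Yn_gadget E i HN) as [Xf [Hfin HXf]].
  destruct (Hfinal (Yn i) I Xf Hfin) as [Xa | Hstage].
  - apply Xa, HXf; simpl; auto.
  - exact (comp_not_stage_ext E i Xf Hcf EY HXf Hstage).
Qed.

Lemma Yn_mem_below_not_mem i j : i < j -> ~ E (Yn j) -> E (Yn i).
Proof.
  intros Hij HY.
  destruct (dec_inh_nat_subset_has_unique_least_element (fun j => i < j /\ ~ E (Yn j)))
    as [j0 [[[Hij0 HY0] Hleast] _]]; [intros; apply classic | eauto |].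
  apply (Yn_mem_of_cut E i (j0 - i - 1) E_tfstg2).
  - replace (S (i + (j0 - i - 1))) with j0 by lia; exact (Nn_mem j0 HY0).
  - intros k Hk EN; destruct E_tfstg2 as (_ & Hcf & _).
    assert (EY : E (Yn (S (i + k)))).
    { apply NNPP; intros HYk.
      assert (j0 <= S (i + k)) by (apply Hleast; split; [lia | exact HYk]); lia. }
    exact (Hcf _ _ EY EN eq_refl).
Qed.

Lemma no_tfstg2 : False.
Proof.
  assert (Hk : exists k, ~ E (Yn k)).
  { destruct (classic (E (Yn 0))) as [EY0 | HY0]; [|eauto].
    destruct (exists_Yn_not_mem_above 0 EY0) as [k [_ Hk]]; eauto. }
  destruct Hk as [k Hk].
  assert (Habove : forall j, k < j -> E (Yn j)).
  { intros j Hj; apply NNPP; intros HY; exact (Hk (Yn_mem_below_not_mem k j Hj HY)). }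
  destruct (exists_Yn_not_mem_above (S k) (Habove _ (le_n _))) as [j [Hj HY]].
  apply HY, Habove; lia.
Qed.

End NoExtension.

Theorem theorem2 :
  exists (U : Type) (A : U -> Prop) (R : U -> U -> Prop),
    is_AF A R /\ finitary A R /\ forall S : U -> Prop, ~ tfstg2 A R S.
Proof.
  exists node, nodes, attacks; split; [|split].
  - intros a b _; split; exact I.
  - exact attacks_finitary.
  - exact no_tfstg2.
Qed.
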